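(* For every incentive compatible and individually rational mechanism $(f,p)$ there exists another incentive compatible and individually rational mechanism $(f',p')$ such that $\Pi(f',p')=\Pi(f,p)$ and $f'_1(v,k)=k\,f'_2(v,k)$ for all $(v,k)\in V\times K$.
   Context: An agent has private type $(v,k)\in V\times K$, $V=[0,1]$, $K=(0,1]$, and from an outcome $(a_1,a_2,t)$ with $a_1,a_2\in[0,1]$ (quantities of two divisible goods) and $t\in\mathbb{R}$ (payment by the agent) gets utility $U_{(v,k)}(a_1,a_2,t)=v\min\{a_1/k,a_2\}-t$. A mechanism is a pair $(f,p)$ with $f=(f_1,f_2):V\times K\to[0,1]^2$, $p:V\times K\to\mathbb{R}$. It is incentive compatible if $U_{(v,k)}(f(v,k),p(v,k))\ge U_{(v,k)}(f(v',k'),p(v',k'))$ for all types $(v,k),(v',k')$, and individually rational if $U_{(v,k)}(f(v,k),p(v,k))\ge0$ for all $(v,k)$. The type is distributed according to a joint distribution $G$ on $V\times K$ with strictly positive density, and the expected revenue of $(f,p)$ is $\Pi(f,p)=\int_{V\times K}p(v,k)\,dG(v,k)$. *)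

From HB Require Import structures.
From mathcomp Require Import all_boot all_order all_algebra.
From mathcomp Require Import all_classical all_reals all_analysis.
Set Implicit Arguments. Unset Strict Implicit. Unset Printing Implicit Defensive.
Import Order.TTheory GRing.Theory Num.Theory.
Local Open Scope classical_set_scope.
Local Open Scope ring_scope.

Section Model.
Variable R : realType.

Definition VK : set (R * R) := [set x | (0 <= x.1 <= 1) /\ (0 < x.2 <= 1)].

Definition util (v k a1 a2 t : R) : R := v * Num.min (a1 / k) a2 - t.

Definition allocation_ok (f1 f2 : R -> R -> R) : Prop :=
  forall v k, VK (v, k) -> (0 <= f1 v k <= 1) /\ (0 <= f2 v k <= 1).

Definition IC (f1 f2 p : R -> R -> R) : Prop :=
  forall v k v' k', VK (v, k) -> VK (v', k') ->
    util v k (f1 v' k') (f2 v' k') (p v' k') <= util v k (f1 v k) (f2 v k) (p v k).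

Definition IR (f1 f2 p : R -> R -> R) : Prop :=
  forall v k, VK (v, k) -> 0 <= util v k (f1 v k) (f2 v k) (p v k).

Definition leb2 := ((@lebesgue_measure R) \x (@lebesgue_measure R))%E.

(* expected revenue int p dG, where G has density g w.r.t. Lebesgue on V x K *)
Definition revenue (g : R * R -> R) (p : R -> R -> R) : \bar R :=
  (\int[leb2]_(x in VK) ((p x.1 x.2 * g x)%:E))%E.

End Model.

From mathcomp Require Import all_boot all_order all_algebra.
From mathcomp Require Import all_classical all_reals all_analysis.
Set Implicit Arguments. Unset Strict Implicit. Unset Printing Implicit Defensive.
Import Order.TTheory GRing.Theory Num.Theory.
Local Open Scope classical_set_scope.
Local Open Scope ring_scope.

(* Replace each allocation (a1, a2) by the largest bundle (k m, m) it contains,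
   m = min(a1/k, a2), and keep the payments.  The truthful utility is unchanged,
   since a Leontief type values (a1, a2) exactly as m complete bundles, while every
   deviation now yields componentwise fewer goods and hence no more utility. *)

Section Bundles.
Variable R : realFieldType.

Definition bundle_size (k a1 a2 : R) : R := Num.min (a1 / k) a2.

Lemma bundle_le1 (k a1 a2 : R) : 0 < k -> k * bundle_size k a1 a2 <= a1.
Proof. by move=> k0; rewrite mulrC -ler_pdivlMr // ge_min lexx. Qed.

Lemma bundle_le2 (k a1 a2 : R) : bundle_size k a1 a2 <= a2.
Proof. by rewrite ge_min lexx orbT. Qed.

Lemma bundle_size_ge0 (k a1 a2 : R) :
  0 < k -> 0 <= a1 -> 0 <= a2 -> 0 <= bundle_size k a1 a2.
Proof. by move=> k0 a10 a20; rewrite le_min a20 divr_ge0 // ltW. Qed.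

Lemma bundle_in_unit_square (k a1 a2 : R) :
  0 < k <= 1 -> 0 <= a1 <= 1 -> 0 <= a2 <= 1 ->
  0 <= k * bundle_size k a1 a2 <= 1 /\ 0 <= bundle_size k a1 a2 <= 1.
Proof.
move=> /andP[k0 k1] /andP[a10 _] /andP[a20 a21].
have m0 : 0 <= bundle_size k a1 a2 by exact: bundle_size_ge0.
have m1 := le_trans (bundle_le2 k a1 a2) a21.
by rewrite !mulr_ge0 ?m0 ?m1 ?(ltW k0) ?mulr_ile1 ?(ltW k0).
Qed.

End Bundles.

Section Utility.
Variable R : realType.

Lemma util_le (v k t a1 a2 b1 b2 : R) :
  0 <= v -> 0 < k -> a1 <= b1 -> a2 <= b2 -> util v k a1 a2 t <= util v k b1 b2 t.
Proof.
move=> v0 k0 ab1 ab2; rewrite /util lerD2r ler_wpM2l // le_min2 //.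
by rewrite ler_pM2r ?invr_gt0.
Qed.

Lemma util_bundle (v k t a1 a2 : R) : k != 0 ->
  util v k (k * bundle_size k a1 a2) (bundle_size k a1 a2) t = util v k a1 a2 t.
Proof. by move=> k0; rewrite /util [k * _]mulrC mulfK // minxx. Qed.

End Utility.

Theorem proposition2 (R : realType) (g : R * R -> R)
  (g_meas : measurable_fun (@VK R) g)
  (g_pos : forall x, @VK R x -> 0 < g x)
  (g_prob : (\int[@leb2 R]_(x in @VK R) (g x)%:E)%E = 1%E)
  (f1 f2 p : R -> R -> R) :
  allocation_ok f1 f2 -> IC f1 f2 p -> IR f1 f2 p ->
  exists f1' f2' p' : R -> R -> R,
    [/\ allocation_ok f1' f2', IC f1' f2' p', IR f1' f2' p',
        revenue g p' = revenue g p &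
        forall v k, @VK R (v, k) -> f1' v k = k * f2' v k].
Proof.
move=> f_ok f_IC f_IR.
pose m v k := bundle_size k (f1 v k) (f2 v k).
have truthful_util v k : VK (v, k) ->
    util v k (k * m v k) (m v k) (p v k) = util v k (f1 v k) (f2 v k) (p v k).
  by case=> _ /andP[k0 _]; rewrite util_bundle ?gt_eqF.
exists (fun v k => k * m v k), m, p; split => //.
- move=> v k vk; have [f1_01 f2_01] := f_ok v k vk.
  by case: vk => _ k01; apply: bundle_in_unit_square.
- move=> v k v' k' vk vk'; rewrite truthful_util //.
  apply: le_trans (f_IC v k v' k' vk vk').
  case: vk => /andP[v0 _] /andP[k0 _]; case: vk' => _ /andP[k'0 _].
  by apply: util_le => //; [apply: bundle_le1 | apply: bundle_le2].
- by move=> v k vk; rewrite truthful_util //; apply: f_IR.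
Qed.
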